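(* There is an absolute constant $C$ such that for all positive integers $n$ and every height profile $(m,M)$ (of some sum-free subset of $\Lambda(R\cup L)$ meeting every fiber) with discrepancy $D$, $$\sum_{i=-2w}^{2w-2}|\Delta^2 m(i)|\le C(D+n),$$ where $(\Delta f)(i)=f(i+1)-f(i)$.
   Context: Sum-free: no $a,b,c$ (not necessarily distinct) with $a+b=c$, coordinatewise addition in $\mathbb{Z}^2$. $\Lambda(X)=\mathbb{Z}^2\cap X$. $R=\{(x,y):0.7n\le x+y\le n,\ |x-y|\le0.8n\}$, $L=\{(x,y):2\lceil0.7n\rceil\le x+y\le1.7n,\ |x-y|\le0.4n\}$, $w=\lfloor0.4n\rfloor$. Fibers $R_i=\{(x,y)\in\Lambda(R):x-y=i\}$ ($|i|\le2w$), $L_k=\{(x,y)\in\Lambda(L):x-y=k\}$ ($|k|\le w$). Height $h(x,y)=\lfloor(x+y-\lceil0.7n\rceil)/2\rfloor$ on $R$ and $\lfloor(x+y-2\lceil0.7n\rceil)/2\rfloor$ on $L$. For sum-free $S\subseteq\Lambda(R\cup L)$ meeting every fiber, its height profile is $(m,M)$ with $m(i)=\min h(S\cap R_i)$, $M(k)=\max h(S\cap L_k)$. Let $\mathcal{T}=\{(-t,2t,t):t\in[w]\}\cup\{(-w-t,2t-1,-w-1+t):t\in[w]\}$. For $s\in\{-1,0,1\}$ and $(i,j,k)\in\mathcal{T}$ set $d_s(i)=M(k+s)-m(j+s)-m(i)$ (taken to be $0$ when some index is outside the domain of $m$ or $M$), $D_s=\sum_{(i,j,k)\in\mathcal{T}}|d_s(i)|$,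 and the discrepancy is $D=\max\{D_{-1},D_0,D_1\}$. *)

From Stdlib Require Import ZArith Reals Bool.
Open Scope Z_scope.
Local Open Scope bool_scope.

(* ceil(0.7 n) for n >= 0 *)
Definition c07 (n : Z) : Z := (7 * n + 9) / 10.
Definition wd (n : Z) : Z := (4 * n) / 10.

Definition inR (n : Z) (p : Z * Z) : Prop :=
  let (x, y) := p in
  7 * n <= 10 * (x + y) /\ x + y <= n /\ 10 * Z.abs (x - y) <= 8 * n.

Definition inL (n : Z) (p : Z * Z) : Prop :=
  let (x, y) := p in
  2 * c07 n <= x + y /\ 10 * (x + y) <= 17 * n /\ 10 * Z.abs (x - y) <= 4 * n.

Definition hR (n : Z) (p : Z * Z) : Z := (fst p + snd p - c07 n) / 2.
Definition hL (n : Z) (p : Z * Z) : Z := (fst p + snd p - 2 * c07 n) / 2.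

Definition Rfib (n i : Z) (p : Z * Z) : Prop := inR n p /\ fst p - snd p = i.
Definition Lfib (n k : Z) (p : Z * Z) : Prop := inL n p /\ fst p - snd p = k.

Definition domm (n i : Z) : bool := (- 2 * wd n <=? i) && (i <=? 2 * wd n).
Definition domM (n k : Z) : bool := (- wd n <=? k) && (k <=? wd n).

Definition sum_free (A : Z * Z -> Prop) : Prop :=
  forall a b c, A a -> A b -> A c -> (fst a + fst b, snd a + snd b) <> c.

Definition is_height_profile (n : Z) (A : Z * Z -> Prop) (m M : Z -> Z) : Prop :=
  sum_free A /\
  (forall p, A p -> inR n p \/ inL n p) /\
  (forall i, domm n i = true -> exists p, A p /\ Rfib n i p) /\
  (forall k, domM n k = true -> exists p, A p /\ Lfib n k p) /\
  (forall i, domm n i = true ->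
     (exists p, A p /\ Rfib n i p /\ hR n p = m i) /\
     (forall p, A p -> Rfib n i p -> m i <= hR n p)) /\
  (forall k, domM n k = true ->
     (exists p, A p /\ Lfib n k p /\ hL n p = M k) /\
     (forall p, A p -> Lfib n k p -> hL n p <= M k)).

Fixpoint zsum_n (a : Z) (c : nat) (f : Z -> Z) : Z :=
  match c with
  | O => 0
  | Datatypes.S c' => f a + zsum_n (a + 1) c' f
  end.
Definition zsum (a b : Z) (f : Z -> Z) : Z := zsum_n a (Z.to_nat (b - a + 1)) f.

(* d_s(i) for the triple (i, j, k); 0 if some index is outside the domain *)
Definition dval (n : Z) (m M : Z -> Z) (s i j k : Z) : Z :=
  if domm n i && domm n (j + s) && domM n (k + s)
  then M (k + s) - m (j + s) - m i else 0.

(* D_s = sum over T = {(-t,2t,t)} u {(-w-t, 2t-1, -w-1+t)}, t in [w] *)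
Definition Ds (n : Z) (m M : Z -> Z) (s : Z) : Z :=
  zsum 1 (wd n) (fun t =>
    Z.abs (dval n m M s (- t) (2 * t) t) +
    Z.abs (dval n m M s (- wd n - t) (2 * t - 1) (- wd n - 1 + t))).

Definition discrepancy (n : Z) (m M : Z -> Z) : Z :=
  Z.max (Ds n m M (-1)) (Z.max (Ds n m M 0) (Ds n m M 1)).

Definition D2 (f : Z -> Z) (i : Z) : Z := f (i + 2) - 2 * f (i + 1) + f i.

(* Both halves of 𝒯 are arithmetic progressions of fiber triples (i, j, k)
   with common difference (-1, 2, 1), and along such a progression the
   defect d_s(t) measures how far m(j+s) is from M(k+s) - m(i).  Four such
   relations at consecutive t cancel every value of M: for j >= 0 they
   express Δ²m(j) through defects, and for i < 0 they express
   Δ²m(i) + Δ²m(j) + Δ²m(j+1) + Δ²m(j+2).  Hence every Δ²m(i) outside O(1)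
   boundary indices is bounded by the defects of three consecutive triples,
   and summing costs O(D); each boundary term is at most 2n because all
   heights lie in [0, n]. *)
From Stdlib Require Import ZArith Reals Lia.
Open Scope Z_scope.

Lemma zsum_n_app a c1 c2 f :
  zsum_n a (c1 + c2) f = zsum_n a c1 f + zsum_n (a + Z.of_nat c1) c2 f.
Proof.
  revert a; induction c1 as [|c1 IH]; intro a; cbn [zsum_n Nat.add].
  - rewrite Z.add_0_r; ring.
  - rewrite IH; replace (a + 1 + Z.of_nat c1) with (a + Z.of_nat (S c1)) by lia; ring.
Qed.

Lemma zsum_n_le a c f g :
  (forall i, a <= i < a + Z.of_nat c -> f i <= g i) -> zsum_n a c f <= zsum_n a c g.
Proof.
  revert a; induction c as [|c IH]; intros a H; cbn [zsum_n]; [lia|].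
  assert (f a <= g a) by (apply H; lia).
  assert (zsum_n (a + 1) c f <= zsum_n (a + 1) c g) by (apply IH; intros; apply H; lia).
  lia.
Qed.

Lemma zsum_n_const a c k : zsum_n a c (fun _ => k) = Z.of_nat c * k.
Proof. revert a; induction c as [|c IH]; intro a; cbn [zsum_n]; [lia | rewrite IH; lia]. Qed.

Lemma zsum_n_add a c f g :
  zsum_n a c (fun i => f i + g i) = zsum_n a c f + zsum_n a c g.
Proof. revert a; induction c as [|c IH]; intro a; cbn [zsum_n]; [lia | rewrite IH; ring]. Qed.

Lemma zsum_n_mul_l a c k f : zsum_n a c (fun i => k * f i) = k * zsum_n a c f.
Proof. revert a; induction c as [|c IH]; intro a; cbn [zsum_n]; [lia | rewrite IH; ring]. Qed.

Lemma zsum_n_shift a c k f : zsum_n a c (fun i => f (i + k)) = zsum_n (a + k) c f.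
Proof.
  revert a; induction c as [|c IH]; intro a; cbn [zsum_n]; [reflexivity|].
  rewrite IH; do 2 f_equal; ring.
Qed.

Lemma zsum_n_reflect a c k f :
  zsum_n a c (fun t => f (k - t)) = zsum_n (k - a - Z.of_nat c + 1) c f.
Proof.
  revert a; induction c as [|c IH]; intro a; [reflexivity|].
  transitivity (f (k - a) + zsum_n (a + 1) c (fun t => f (k - t))); [reflexivity|].
  rewrite IH.
  replace (S c) with (c + 1)%nat by lia; rewrite zsum_n_app; cbn [zsum_n].
  replace (k - a - Z.of_nat (c + 1) + 1 + Z.of_nat c) with (k - a) by lia.
  replace (k - a - Z.of_nat (c + 1) + 1) with (k - (a + 1) - Z.of_nat c + 1) by lia.
  ring.
Qed.

Lemma zsum_n_pair a c f :
  zsum_n a c (fun t => f (2 * t - 1) + f (2 * t)) = zsum_n (2 * a - 1) (2 * c) f.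
Proof.
  revert a; induction c as [|c IH]; intro a; [reflexivity|].
  replace (2 * S c)%nat with (S (S (2 * c))) by lia.
  cbn [zsum_n]; rewrite IH.
  replace (2 * (a + 1) - 1) with (2 * a - 1 + 1 + 1) by ring.
  replace (2 * a) with (2 * a - 1 + 1) at 2 by ring.
  ring.
Qed.

Lemma zsum_le a b f g :
  (forall i, a <= i <= b -> f i <= g i) -> zsum a b f <= zsum a b g.
Proof. intro H; apply zsum_n_le; intros i Hi; apply H; lia. Qed.

Lemma zsum_const a b k : zsum a b (fun _ => k) = Z.max 0 (b - a + 1) * k.
Proof. unfold zsum; rewrite zsum_n_const; f_equal; lia. Qed.

Lemma zsum_le_const a b f k :
  (forall i, a <= i <= b -> f i <= k) -> zsum a b f <= Z.max 0 (b - a + 1) * k.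
Proof. intro H; rewrite <- zsum_const; exact (zsum_le _ _ _ _ H). Qed.

Lemma zsum_nonneg a b f : (forall i, a <= i <= b -> 0 <= f i) -> 0 <= zsum a b f.
Proof.
  intro H; replace 0 with (zsum a b (fun _ => 0)) by (rewrite zsum_const; ring).
  exact (zsum_le _ _ _ _ H).
Qed.

Lemma zsum_add a b f g : zsum a b (fun i => f i + g i) = zsum a b f + zsum a b g.
Proof. apply zsum_n_add. Qed.

Lemma zsum_mul_l a b k f : zsum a b (fun i => k * f i) = k * zsum a b f.
Proof. apply zsum_n_mul_l. Qed.

Lemma zsum_shift a b k f : zsum a b (fun i => f (i + k)) = zsum (a + k) (b + k) f.
Proof.
  unfold zsum; rewrite zsum_n_shift.
  replace (b + k - (a + k) + 1) with (b - a + 1) by ring; reflexivity.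
Qed.

Lemma zsum_reflect a b k lo hi f : lo = k - b -> hi = k - a ->
  zsum lo hi f = zsum a b (fun t => f (k - t)).
Proof.
  intros -> ->; unfold zsum; rewrite zsum_n_reflect.
  replace (k - a - (k - b) + 1) with (b - a + 1) by ring.
  destruct (Z.le_gt_cases 0 (b - a + 1)).
  - f_equal; lia.
  - replace (Z.to_nat (b - a + 1)) with 0%nat by lia; reflexivity.
Qed.

Lemma zsum_pair a b lo hi f : lo = 2 * a - 1 -> hi = 2 * b ->
  zsum lo hi f = zsum a b (fun t => f (2 * t - 1) + f (2 * t)).
Proof.
  intros -> ->; unfold zsum; rewrite zsum_n_pair.
  f_equal; lia.
Qed.

Lemma zsum_split a c d b f : d = c + 1 -> a <= d -> c <= b ->
  zsum a b f = zsum a c f + zsum d b f.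
Proof.
  intros -> Had Hcb; unfold zsum.
  replace (Z.to_nat (b - a + 1)) with (Z.to_nat (c - a + 1) + Z.to_nat (b - (c + 1) + 1))%nat
    by lia.
  rewrite zsum_n_app; do 2 f_equal; lia.
Qed.

Lemma zsum_subrange_le a b a' b' f : (forall i, 0 <= f i) ->
  a' <= a -> a <= b + 1 -> b <= b' -> zsum a b f <= zsum a' b' f.
Proof.
  intros Hf Ha Hab Hb.
  rewrite (zsum_split a' (a - 1) a b' f), (zsum_split a b (b + 1) b' f) by lia.
  pose proof (zsum_nonneg a' (a - 1) f (fun i _ => Hf i)).
  pose proof (zsum_nonneg (b + 1) b' f (fun i _ => Hf i)).
  lia.
Qed.

Lemma zsum_window2 w g : (forall i, 0 <= g i) -> 1 <= w ->
  zsum 1 (w - 1) (fun t => g t + g (t + 1)) <= 2 * zsum 1 w g.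
Proof.
  intros Hg Hw; rewrite zsum_add, zsum_shift.
  pose proof (zsum_subrange_le 1 (w - 1) 1 w g Hg).
  pose proof (zsum_subrange_le (1 + 1) (w - 1 + 1) 1 w g Hg).
  lia.
Qed.

Lemma zsum_window3 w g : (forall i, 0 <= g i) -> 2 <= w ->
  zsum 1 (w - 2) (fun t => g t + g (t + 1) + g (t + 2)) <= 3 * zsum 1 w g.
Proof.
  intros Hg Hw; rewrite !zsum_add, !zsum_shift.
  pose proof (zsum_subrange_le 1 (w - 2) 1 w g Hg).
  pose proof (zsum_subrange_le (1 + 1) (w - 2 + 1) 1 w g Hg).
  pose proof (zsum_subrange_le (1 + 2) (w - 2 + 2) 1 w g Hg).
  lia.
Qed.

Lemma zsum_reflected_window3_le w k c lo hi f g :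
  (forall i, 0 <= g i) -> 0 <= k -> 2 <= w -> lo = c - (w - 2) -> hi = c - 1 ->
  (forall t, 1 <= t <= w - 2 -> f (c - t) <= k * (g t + g (t + 1) + g (t + 2))) ->
  zsum lo hi f <= 3 * k * zsum 1 w g.
Proof.
  intros Hg Hk Hw -> -> Hf.
  rewrite (zsum_reflect 1 (w - 2) c) by ring.
  replace (3 * k * zsum 1 w g) with (k * (3 * zsum 1 w g)) by ring.
  eapply Z.le_trans; [apply zsum_le; exact Hf|].
  rewrite zsum_mul_l; apply Z.mul_le_mono_nonneg_l; [exact Hk|].
  exact (zsum_window3 w g Hg Hw).
Qed.

Lemma D2_eq f i a b : a = i + 2 -> b = i + 1 -> D2 f i = f a - 2 * f b + f i.
Proof. intros -> ->; reflexivity. Qed.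

Definition progression_bounded (m M : Z -> Z) (x0 y0 z0 w : Z) (e : Z -> Z) : Prop :=
  forall t s, 1 <= t <= w -> 1 <= t + s <= w -> -1 <= s <= 1 ->
    Z.abs (M (z0 + t + s) - m (y0 + 2 * t + s) - m (x0 - t)) <= e t.

Section Progression.

Variables (m M : Z -> Z) (x0 y0 z0 w : Z) (e : Z -> Z).
Hypothesis bounded : progression_bounded m M x0 y0 z0 w e.

Lemma progression_bound_at t s a b c :
  1 <= t <= w /\ 1 <= t + s <= w /\ -1 <= s <= 1 ->
  a = z0 + t + s /\ b = y0 + 2 * t + s /\ c = x0 - t ->
  Z.abs (M a - m b - m c) <= e t.
Proof. intros (Ht & Hts & Hs) (-> & -> & ->); exact (bounded t s Ht Hts Hs). Qed.

(* m(j) + m(j+2) and 2 m(j+1) are both close to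
   M(z0+t) + M(z0+t+1) - m(x0-t) - m(x0-t-1). *)
Lemma abs_D2_progression t j : 1 <= t <= w - 1 -> j = y0 + 2 * t ->
  Z.abs (D2 m j) <= 2 * (e t + e (t + 1)).
Proof.
  intros Ht ->.
  rewrite (D2_eq m _ (y0 + 2 * t + 2) (y0 + 2 * t + 1)) by lia.
  pose proof (progression_bound_at t 0 (z0 + t) (y0 + 2 * t) (x0 - t) ltac:(lia) ltac:(lia)).
  pose proof (progression_bound_at t 1 (z0 + t + 1) (y0 + 2 * t + 1) (x0 - t)
    ltac:(lia) ltac:(lia)).
  pose proof (progression_bound_at (t + 1) 0 (z0 + t + 1) (y0 + 2 * t + 2) (x0 - t - 1)
    ltac:(lia) ltac:(lia)).
  pose proof (progression_bound_at (t + 1) (-1) (z0 + t) (y0 + 2 * t + 1) (x0 - t - 1)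
    ltac:(lia) ltac:(lia)).
  lia.
Qed.

(* Since m(x0-t-u) is close to M(z0+t+u+s) - m(y0+2t+2u+s), the second
   difference of m at x0-t-2 is close to minus the third-order combination
   m(j) - m(j+1) - m(j+3) + m(j+4) = Δ²m(j) + Δ²m(j+1) + Δ²m(j+2). *)
Lemma abs_D2_progression_mirror t i j : 1 <= t <= w - 2 ->
  i = x0 - t - 2 -> j = y0 + 2 * t ->
  Z.abs (D2 m i + D2 m j + D2 m (j + 1) + D2 m (j + 2)) <=
    e t + 2 * e (t + 1) + e (t + 2).
Proof.
  intros Ht -> ->.
  rewrite (D2_eq m (x0 - t - 2) (x0 - t) (x0 - t - 1)),
    (D2_eq m (y0 + 2 * t) (y0 + 2 * t + 2) (y0 + 2 * t + 1)),
    (D2_eq m (y0 + 2 * t + 1) (y0 + 2 * t + 3) (y0 + 2 * t + 2)),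
    (D2_eq m (y0 + 2 * t + 2) (y0 + 2 * t + 4) (y0 + 2 * t + 3)) by lia.
  pose proof (progression_bound_at t 0 (z0 + t) (y0 + 2 * t) (x0 - t) ltac:(lia) ltac:(lia)).
  pose proof (progression_bound_at (t + 2) 0 (z0 + t + 2) (y0 + 2 * t + 4) (x0 - t - 2)
    ltac:(lia) ltac:(lia)).
  pose proof (progression_bound_at (t + 1) 1 (z0 + t + 2) (y0 + 2 * t + 3) (x0 - t - 1)
    ltac:(lia) ltac:(lia)).
  pose proof (progression_bound_at (t + 1) (-1) (z0 + t) (y0 + 2 * t + 1) (x0 - t - 1)
    ltac:(lia) ltac:(lia)).
  lia.
Qed.

End Progression.

Lemma dval_eq n m M s i j k :
  -2 * wd n <= i <= 2 * wd n -> -2 * wd n <= j + s <= 2 * wd n -> - wd n <= k + s <= wd n ->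
  dval n m M s i j k = M (k + s) - m (j + s) - m i.
Proof.
  intros; unfold dval, domm, domM.
  rewrite !(proj2 (Z.leb_le _ _)) by lia; reflexivity.
Qed.

Definition Ds_term (n : Z) (m M : Z -> Z) (s t : Z) : Z :=
  Z.abs (dval n m M s (- t) (2 * t) t) +
  Z.abs (dval n m M s (- wd n - t) (2 * t - 1) (- wd n - 1 + t)).

Definition defect (n : Z) (m M : Z -> Z) (t : Z) : Z :=
  Ds_term n m M (-1) t + Ds_term n m M 0 t + Ds_term n m M 1 t.

Section Defect.

Variables (n : Z) (m M : Z -> Z).

Lemma Ds_term_nonneg s t : 0 <= Ds_term n m M s t.
Proof.
  unfold Ds_term.
  pose proof (Z.abs_nonneg (dval n m M s (- t) (2 * t) t)).
  pose proof (Z.abs_nonneg (dval n m M s (- wd n - t) (2 * t - 1) (- wd n - 1 + t))).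
  lia.
Qed.

Lemma defect_nonneg t : 0 <= defect n m M t.
Proof.
  unfold defect.
  pose proof (Ds_term_nonneg (-1) t); pose proof (Ds_term_nonneg 0 t);
    pose proof (Ds_term_nonneg 1 t).
  lia.
Qed.

Lemma Ds_term_le_defect s t : -1 <= s <= 1 -> Ds_term n m M s t <= defect n m M t.
Proof.
  intro Hs; unfold defect.
  pose proof (Ds_term_nonneg (-1) t); pose proof (Ds_term_nonneg 0 t);
    pose proof (Ds_term_nonneg 1 t).
  assert (s = -1 \/ s = 0 \/ s = 1) as [-> | [-> | ->]] by lia; lia.
Qed.

Lemma zsum_defect_le : zsum 1 (wd n) (defect n m M) <= 3 * discrepancy n m M.
Proof.
  unfold defect, discrepancy; rewrite !zsum_add.
  change (zsum 1 (wd n) (Ds_term n m M ?s)) with (Ds n m M s).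
  lia.
Qed.

Lemma discrepancy_nonneg : 0 <= discrepancy n m M.
Proof.
  pose proof (zsum_nonneg 1 (wd n) _ (fun t _ => Ds_term_nonneg 0 t)).
  unfold discrepancy; change (zsum 1 (wd n) (Ds_term n m M 0)) with (Ds n m M 0) in *.
  lia.
Qed.

Lemma defect_first_progression : progression_bounded m M 0 0 0 (wd n) (defect n m M).
Proof.
  intros t s Ht Hts Hs.
  change (Z.abs (M (t + s) - m (2 * t + s) - m (- t)) <= defect n m M t).
  rewrite <- (dval_eq n m M s (- t) (2 * t) t) by lia.
  pose proof (Ds_term_le_defect s t Hs); unfold Ds_term in *.
  pose proof (Z.abs_nonneg (dval n m M s (- wd n - t) (2 * t - 1) (- wd n - 1 + t))).
  lia.
Qed.

Lemma defect_second_progression :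
  progression_bounded m M (- wd n) (-1) (- wd n - 1) (wd n) (defect n m M).
Proof.
  intros t s Ht Hts Hs.
  replace (-1 + 2 * t + s) with (2 * t - 1 + s) by ring.
  rewrite <- (dval_eq n m M s (- wd n - t) (2 * t - 1) (- wd n - 1 + t)) by lia.
  pose proof (Ds_term_le_defect s t Hs); unfold Ds_term in *.
  pose proof (Z.abs_nonneg (dval n m M s (- t) (2 * t) t)).
  lia.
Qed.

End Defect.

Section SecondDifferences.

Variables (n : Z) (m M : Z -> Z).
Local Notation w := (wd n).
Local Notation U := (defect n m M).

Lemma abs_D2_even t i : 1 <= t <= w - 1 -> i = 2 * t ->
  Z.abs (D2 m i) <= 2 * (U t + U (t + 1)).
Proof.
  intros Ht Hi.
  exact (abs_D2_progression m M 0 0 0 w U (defect_first_progression n m M) t i Ht Hi).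
Qed.

Lemma abs_D2_odd t i : 1 <= t <= w - 1 -> i = 2 * t - 1 ->
  Z.abs (D2 m i) <= 2 * (U t + U (t + 1)).
Proof.
  intros Ht Hi.
  exact (abs_D2_progression m M _ _ _ w U (defect_second_progression n m M) t i Ht
    ltac:(lia)).
Qed.

Lemma abs_D2_near t i : 1 <= t <= w - 2 -> i = -2 - t ->
  Z.abs (D2 m i) <= 8 * (U t + U (t + 1) + U (t + 2)).
Proof.
  intros Ht Hi.
  pose proof (abs_D2_progression_mirror m M 0 0 0 w U (defect_first_progression n m M)
    t i (2 * t) Ht ltac:(lia) eq_refl).
  pose proof (abs_D2_even t (2 * t) ltac:(lia) eq_refl).
  pose proof (abs_D2_odd (t + 1) (2 * t + 1) ltac:(lia) ltac:(lia)).
  pose proof (abs_D2_even (t + 1) (2 * t + 2) ltac:(lia) ltac:(lia)).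
  replace (t + 1 + 1) with (t + 2) in * by ring.
  pose proof (defect_nonneg n m M t); pose proof (defect_nonneg n m M (t + 1));
    pose proof (defect_nonneg n m M (t + 2)).
  lia.
Qed.

Lemma abs_D2_far t i : 1 <= t <= w - 2 -> i = - w - 2 - t ->
  Z.abs (D2 m i) <= 8 * (U t + U (t + 1) + U (t + 2)).
Proof.
  intros Ht Hi.
  pose proof (abs_D2_progression_mirror m M _ _ _ w U (defect_second_progression n m M)
    t i (2 * t - 1) Ht ltac:(lia) ltac:(lia)).
  pose proof (abs_D2_odd t (2 * t - 1) ltac:(lia) eq_refl).
  pose proof (abs_D2_even t (2 * t - 1 + 1) ltac:(lia) ltac:(lia)).
  pose proof (abs_D2_odd (t + 1) (2 * t - 1 + 2) ltac:(lia) ltac:(lia)).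
  replace (t + 1 + 1) with (t + 2) in * by ring.
  pose proof (defect_nonneg n m M t); pose proof (defect_nonneg n m M (t + 1));
    pose proof (defect_nonneg n m M (t + 2)).
  lia.
Qed.

Lemma zsum_abs_D2_nonneg_block : 1 <= w ->
  zsum 1 (2 * w - 2) (fun i => Z.abs (D2 m i)) <= 8 * zsum 1 w U.
Proof.
  intro Hw.
  rewrite (zsum_pair 1 (w - 1)) by ring.
  eapply Z.le_trans.
  - apply (zsum_le _ _ _ (fun t => 4 * (U t + U (t + 1)))); intros t Ht.
    pose proof (abs_D2_odd t (2 * t - 1) Ht eq_refl).
    pose proof (abs_D2_even t (2 * t) Ht eq_refl).
    lia.
  - rewrite zsum_mul_l.
    pose proof (zsum_window2 w U (defect_nonneg n m M) Hw).
    lia.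
Qed.

Lemma zsum_abs_D2_near_block : 2 <= w ->
  zsum (- w) (-3) (fun i => Z.abs (D2 m i)) <= 24 * zsum 1 w U.
Proof.
  intro Hw.
  apply (zsum_reflected_window3_le w 8 (-2)); try lia; [exact (defect_nonneg n m M)|].
  intros t Ht; exact (abs_D2_near t (-2 - t) Ht eq_refl).
Qed.

Lemma zsum_abs_D2_far_block : 2 <= w ->
  zsum (-2 * w) (- w - 3) (fun i => Z.abs (D2 m i)) <= 24 * zsum 1 w U.
Proof.
  intro Hw.
  apply (zsum_reflected_window3_le w 8 (- w - 2)); try lia; [exact (defect_nonneg n m M)|].
  intros t Ht; exact (abs_D2_far t (- w - 2 - t) Ht eq_refl).
Qed.

End SecondDifferences.

Lemma wd_nonneg n : 0 <= n -> 0 <= wd n.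
Proof. intro; unfold wd; Z.div_mod_to_equations; lia. Qed.

Lemma height_profile_min_bounds n A m M i :
  is_height_profile n A m M -> domm n i = true -> 0 <= m i <= n.
Proof.
  intros (_ & _ & _ & _ & Hmin & _) Hi.
  destruct (Hmin i Hi) as ((p & _ & (HR & _) & <-) & _).
  destruct p as [x y]; unfold inR in HR; unfold hR, c07; cbn [fst snd].
  Z.div_mod_to_equations; lia.
Qed.

Lemma abs_D2_le_profile n A m M i : is_height_profile n A m M ->
  -2 * wd n <= i <= 2 * wd n - 2 -> Z.abs (D2 m i) <= 2 * n.
Proof.
  intros Hprof Hi; unfold D2.
  assert (Hdom : forall k, i <= k <= i + 2 -> domm n k = true).
  { intros k Hk; unfold domm; rewrite !(proj2 (Z.leb_le _ _)) by lia; reflexivity. }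
  pose proof (height_profile_min_bounds n A m M i Hprof (Hdom i ltac:(lia))).
  pose proof (height_profile_min_bounds n A m M (i + 1) Hprof (Hdom (i + 1) ltac:(lia))).
  pose proof (height_profile_min_bounds n A m M (i + 2) Hprof (Hdom (i + 2) ltac:(lia))).
  lia.
Qed.

Lemma zsum_abs_D2_le n A m M : 0 < n -> is_height_profile n A m M ->
  zsum (- 2 * wd n) (2 * wd n - 2) (fun i => Z.abs (D2 m i)) <=
    168 * (discrepancy n m M + n).
Proof.
  intros Hn Hprof.
  assert (Hf : forall a b, -2 * wd n <= a -> b <= 2 * wd n - 2 ->
      zsum a b (fun i => Z.abs (D2 m i)) <= Z.max 0 (b - a + 1) * (2 * n))
    by (intros; apply zsum_le_const; intros; apply (abs_D2_le_profile n A m M i Hprof); lia).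
  pose proof (zsum_defect_le n m M); pose proof (discrepancy_nonneg n m M).
  pose proof (wd_nonneg n ltac:(lia)).
  destruct (Z.le_gt_cases (wd n) 1) as [Hw | Hw].
  - pose proof (Hf (- 2 * wd n) (2 * wd n - 2) ltac:(lia) ltac:(lia)).
    assert (wd n = 0 \/ wd n = 1) as [E | E] by lia; rewrite E in *; lia.
  - (* The five indices -w-2, -w-1, -2, -1, 0 lie outside the three blocks. *)
    rewrite (zsum_split _ (- wd n - 3) (- wd n - 2)),
      (zsum_split (- wd n - 2) (- wd n - 1) (- wd n)),
      (zsum_split (- wd n) (-3) (-2)), (zsum_split (-2) 0 1) by lia.
    pose proof (Hf (- wd n - 2) (- wd n - 1) ltac:(lia) ltac:(lia)).
    pose proof (Hf (-2) 0 ltac:(lia) ltac:(lia)).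
    pose proof (zsum_abs_D2_far_block n m M ltac:(lia)).
    pose proof (zsum_abs_D2_near_block n m M ltac:(lia)).
    pose proof (zsum_abs_D2_nonneg_block n m M ltac:(lia)).
    lia.
Qed.

Theorem mainTheorem18 :
  exists C : R,
    forall (n : Z), (0 < n)%Z ->
    forall (A : Z * Z -> Prop) (m M : Z -> Z),
      is_height_profile n A m M ->
      (IZR (zsum (- 2 * wd n) (2 * wd n - 2) (fun i => Z.abs (D2 m i)))
        <= C * IZR (discrepancy n m M + n))%R.
Proof.
  exists (IZR 168); intros n Hn A m M Hprof.
  rewrite <- mult_IZR; apply IZR_le.
  exact (zsum_abs_D2_le n A m M Hn Hprof).
Qed.
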